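(* Let $\mathbf{B}$ be a 2-element algebra with universe $\{0,1\}$ such that $\mathrm{Clo}(\mathbf{B})=\mathsf{U}$, and let $\mathbf{A}=\mathbf{B}^n$. Then any algorithm (classical or quantum) solving $\mathrm{HKP}(\mathbf{A})$ must make $\Omega(2^n)$ queries to the oracle.
   Context: $\mathrm{Clo}(\mathbf{B})$ is the clone of term operations of $\mathbf{B}$ (smallest set of operations on $\{0,1\}$ containing the basic operations and projections, closed under composition). $\mathsf{U}$ is the clone generated by $\neg x$ and the constant $0$. $\mathbf{B}^n$ is the direct power with coordinatewise operations. A congruence is an equivalence relation compatible with all operations; $\ker(\phi)=\{(a,b):\phi(a)=\phi(b)\}$. The Hidden Kernel Problem $\mathrm{HKP}(\mathbf{A})$: given a similar algebra $\mathbf{C}$ and a homomorphism $\phi:\mathbf{A}\to\mathbf{C}$ accessible only as an oracle, determine the congruence $\ker(\phi)$. *)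

From mathcomp Require Import all_boot all_algebra.
From mathcomp Require Import complex.
From mathcomp Require Import Rstruct.
Set Implicit Arguments. Unset Strict Implicit. Unset Printing Implicit Defensive.
Import GRing.Theory Num.Theory.
Local Open Scope ring_scope.

(* A signature is a type of operation symbols I with arities ar : I -> nat;
   an algebra of that signature on carrier X is
   ops : forall i, ('I_(ar i) -> X) -> X. *)

Inductive term (I : Type) (ar : I -> nat) (k : nat) : Type :=
| tvar of 'I_k
| tapp (i : I) of ('I_(ar i) -> term ar k).

Fixpoint teval (I : Type) (ar : I -> nat) (X : Type)
  (ops : forall i, ('I_(ar i) -> X) -> X) (k : nat) (t : term ar k)
  (x : 'I_k -> X) : X :=
  match t with
  | tvar j => x j
  | tapp i ts => ops i (fun l => teval ops (ts l) x)
  end.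

Definition in_clo (I : Type) (ar : I -> nat)
  (ops : forall i, ('I_(ar i) -> bool) -> bool) (k : nat)
  (f : ('I_k -> bool) -> bool) : Prop :=
  exists t : term ar k, forall x, teval ops t x = f x.

(* The clone U generated by negation and the constant 0. *)
Inductive usym := u_neg | u_zero.
Definition u_ar (s : usym) : nat := match s with u_neg => 1 | u_zero => 0 end.
Definition u_ops (s : usym) : ('I_(u_ar s) -> bool) -> bool :=
  match s as s0 return ('I_(u_ar s0) -> bool) -> bool with
  | u_neg => fun x => ~~ x ord0
  | u_zero => fun _ => false
  end.

(* Clo(B) = U  (equality of clones, compared on all positive arities). *)
Definition clo_is_U (I : Type) (ar : I -> nat)
  (ops : forall i, ('I_(ar i) -> bool) -> bool) : Prop :=
  forall (k : nat), (0 < k)%N -> forall f : ('I_k -> bool) -> bool,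
    in_clo ops f <-> in_clo u_ops f.

Definition pow_carrier (n : nat) := {ffun 'I_n -> bool}.

Definition pow_ops (I : Type) (ar : I -> nat)
  (ops : forall i, ('I_(ar i) -> bool) -> bool) (n : nat) :
  forall i, ('I_(ar i) -> pow_carrier n) -> pow_carrier n :=
  fun i args => [ffun j => ops i (fun l => args l j)].

Definition is_hom (I : Type) (ar : I -> nat) (X Y : Type)
  (opsX : forall i, ('I_(ar i) -> X) -> X)
  (opsY : forall i, ('I_(ar i) -> Y) -> Y) (phi : X -> Y) : Prop :=
  forall i (args : 'I_(ar i) -> X), phi (opsX i args) = opsY i (fun l => phi (args l)).

Definition is_ker (n : nat) (Y : Type) (K : {set pow_carrier n * pow_carrier n})
  (phi : pow_carrier n -> Y) : Prop :=
  forall a b, (a, b) \in K <-> phi a = phi b.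

Definition Cx := Rdefinitions.R[i].

(* operators on the Hilbert space with orthonormal basis indexed by T *)
Definition qop (T : finType) := T -> T -> Cx.
Definition qapply (T : finType) (M : qop T) (v : T -> Cx) : T -> Cx :=
  fun t => \sum_s M t s * v s.
Definition unitary (T : finType) (M : qop T) : Prop :=
  forall t t', \sum_s (M s t)^* * M s t' = (t == t')%:R.

(* Basis of the register space: query register (element of A = B^n),
   answer register (m bits, holding an encoding of an element of C),
   workspace with d+1 basis states. *)
Definition qbasis (n m d : nat) : finType :=
  (pow_carrier n * {ffun 'I_m -> bool} * 'I_d.+1)%type.

Definition qinit (n m d : nat) : qbasis n m d :=
  ([ffun => false], [ffun => false], ord0).

(* Standard oracle: |a, y, w> |-> |a, y xor e(a), w>, where e = enc o phi. *)
Definition oracle_shift (n m d : nat) (e : pow_carrier n -> {ffun 'I_m -> bool})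
  (s : qbasis n m d) : qbasis n m d :=
  let: (a, y, w) := s in (a, [ffun j => y j (+) e a j], w).

Definition oracle (n m d : nat) (e : pow_carrier n -> {ffun 'I_m -> bool}) :
  qop (qbasis n m d) :=
  fun t s => (t == oracle_shift e s)%:R.

(* Final state  U_T O U_(T-1) ... O U_1 O U_0 |init>  (T oracle calls). *)
Fixpoint qrun (T : finType) (O : qop T) (U : nat -> qop T) (v0 : T -> Cx)
  (k : nat) : T -> Cx :=
  match k with
  | 0 => qapply (U 0%N) v0
  | k'.+1 => qapply (U k) (qapply O (qrun O U v0 k'))
  end.

Definition delta (T : finType) (t0 : T) : T -> Cx := fun t => (t == t0)%:R.

Definition succ_prob (n m d : nat) (e : pow_carrier n -> {ffun 'I_m -> bool})
  (U : nat -> qop (qbasis n m d))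
  (out : qbasis n m d -> {set pow_carrier n * pow_carrier n})
  (T : nat) (K : {set pow_carrier n * pow_carrier n}) : Cx :=
  \sum_(b | out b == K)
     `|qrun (oracle e) U (delta (qinit n m d)) T b| ^+ 2.

(* HKP(B^n) is solved (bounded error 1/3) by a quantum query algorithm making
   T queries: for every given similar algebra C (with an injective m-bit
   encoding of its elements, used by the oracle), there is a quantum query
   circuit (depending on C) with T oracle calls which, for every homomorphism
   phi : B^n -> C, outputs ker(phi) with probability >= 2/3. *)
Definition solves_HKP_quantum (I : Type) (ar : I -> nat)
  (opsB : forall i, ('I_(ar i) -> bool) -> bool) (n T : nat) : Prop :=
  forall (C : Type) (opsC : forall i, ('I_(ar i) -> C) -> C)
         (m : nat) (enc : C -> {ffun 'I_m -> bool}), injective enc ->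
  exists (d : nat) (U : nat -> qop (qbasis n m d))
         (out : qbasis n m d -> {set pow_carrier n * pow_carrier n}),
    (forall k, (k <= T)%N -> unitary (U k)) /\
    forall phi : pow_carrier n -> C,
      is_hom (@pow_ops I ar opsB n) opsC phi ->
      forall K, is_ker K phi ->
        (2%:R / 3%:R : Cx) <= succ_prob (fun a => enc (phi a)) U out T K.

(* Every basic operation of B is a projection, a negated projection or a constant, so a
   self-map of B^n that commutes with complementation and fixes the two constant tuples is
   an endomorphism.  For n = p + 2 and a Boolean function x on {0,1}^p, the map that copies
   coordinate 0 onto coordinate 1 exactly when x holds at the complement-invariant key
   (a_(j+2) xor a_0)_j is such an endomorphism, and distinct x give distinct kernels.
   The oracle of this endomorphism is affine in a single bit of x, so after T queries the
   amplitudes are multilinear polynomials of degree <= T in x, and the probability of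
   outputting the kernel for x' has degree <= 2T.  The matrix of these probabilities over
   all 2^(2^p) pairs (x, x') has diagonal >= 2/3 and row sums <= 1, so it has full rank,
   yet it factors through the monomials of degree <= 2T.  Counting them gives
   2^p <= 5T, i.e. T >= 2^n / 20. *)

From mathcomp Require Import all_boot all_order all_algebra.
From mathcomp Require Import complex Rstruct ring zify.
From Stdlib Require Import FunctionalExtensionality.
Set Implicit Arguments. Unset Strict Implicit. Unset Printing Implicit Defensive.
Import Order.TTheory GRing.Theory Num.Theory.

(* The factor 5 works because (4/3)^5 > 4. *)
Lemma leq_pow43 M t : 4 ^ M <= 4 ^ t * 3 ^ M -> M <= 5 * t.
Proof.
move=> le43; have : 4 ^ (5 * M) <= 4 ^ (5 * t + 4 * M).
  rewrite mulnC expnM; apply: leq_trans (_ : _ <= (4 ^ t * 3 ^ M) ^ 5) _.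
    by rewrite leq_exp2r.
  rewrite expnMn -!expnM (mulnC t) expnD leq_mul2l (mulnC M 5) !expnM.
  by apply/orP; right; case: (posnP M) => [-> // | M_gt0]; rewrite leq_exp2r.
by rewrite leq_exp2l // => le_exp; lia.
Qed.

Section SmallSets.
Variable V : finType.

Lemma sum_card_set (f : nat -> nat) :
  \sum_(S : {set V}) f #|S| = \sum_(k < #|V|.+1) 'C(#|V|, k) * f k.
Proof.
transitivity (\sum_(S : {set V}) \sum_(k < #|V|.+1) (#|S| == k) * f k).
  apply: eq_bigr => S _.
  have ltSV : #|S| < #|V|.+1 by rewrite ltnS max_card.
  rewrite (bigD1 (Ordinal ltSV)) //= eqxx mul1n big1 ?addn0 // => k.
  by rewrite -(inj_eq val_inj) /= eq_sym => /negbTE ->.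
rewrite exchange_big; apply: eq_bigr => k _.
rewrite -big_distrl /= -(card_draws V k); congr (_ * _).
rewrite -(sum1_card (mem [set A : {set V} | #|A| == k])) [RHS]big_mkcond /=.
by apply: eq_bigr => S _; rewrite inE; case: (_ == _).
Qed.

Lemma card_small_sets t :
  2 ^ #|V| * #|[set S : {set V} | #|S| <= t]| <= 2 ^ t * 3 ^ #|V|.
Proof.
rewrite -sum1_card big_mkcond /= big_distrr /=.
apply: (@leq_trans (\sum_(S : {set V}) 2 ^ t * 2 ^ (#|V| - #|S|))).
  apply: leq_sum => S _; rewrite inE; case: ifP => le_St; last by rewrite muln0.
  by rewrite muln1 -expnD leq_exp2l // -leq_subLR leq_sub2l.
rewrite -big_distrr leq_mul2l (sum_card_set (fun k => 2 ^ (#|V| - k))) (expnDn 2 1 #|V|).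
by apply/orP; right; apply: leq_sum => k _; rewrite exp1n muln1.
Qed.

Lemma card_le_small_sets t :
  2 ^ #|V| <= #|[set S : {set V} | #|S| <= t.*2]| -> #|V| <= 5 * t.
Proof.
move=> le_pow; apply: leq_pow43.
rewrite (expnMn 2 2) -(expnM 2 2 t) mul2n; apply: leq_trans (card_small_sets _).
by rewrite leq_mul2l le_pow orbT.
Qed.

End SmallSets.

Local Open Scope ring_scope.

Section PolynomialMethod.
Variable V : finType.
Local Notation X := {ffun V -> bool}.

Definition monomial (S : {set V}) (x : X) : Cx := (S \subset [set v | x v])%:R.

Lemma monomialU S S' x : monomial S x * monomial S' x = monomial (S :|: S') x.
Proof. by rewrite /monomial subUset; do 2!case: (_ \subset _); rewrite ?mul1r ?mul0r. Qed.

Lemma monomial0 x : monomial set0 x = 1.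
Proof. by rewrite /monomial sub0set. Qed.

Lemma monomial1 v x : monomial [set v] x = (x v)%:R.
Proof. by rewrite /monomial sub1set inE. Qed.

Lemma conj_monomial S x : (monomial S x)^* = monomial S x.
Proof. exact: conjC_nat. Qed.

Definition poly_deg_le (Y : Type) (k : nat) (F : X -> Y -> Cx) : Prop :=
  exists (J : finType) (S : J -> {set V}) (w : J -> Y -> Cx),
    (forall j, #|S j| <= k)%N /\ forall x y, F x y = \sum_j monomial (S j) x * w j y.

Lemma poly_deg_le_const (Y : Type) (v : Y -> Cx) : poly_deg_le 0 (fun _ => v).
Proof.
exists 'I_1, (fun _ => set0), (fun _ => v); split=> [j | x y]; first by rewrite cards0.
by rewrite big_ord1 monomial0 mul1r.
Qed.

Lemma poly_deg_le_sum (Y Z : finType) (P : Z -> pred Y) k (F : X -> Y -> Cx) :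
  poly_deg_le k F -> poly_deg_le k (fun x z => \sum_(y | P z y) F x y).
Proof.
move=> [J [S [w [le_S eqF]]]].
exists J, S, (fun j z => \sum_(y | P z y) w j y); split=> // x z.
under eq_bigr do rewrite eqF.
by rewrite exchange_big; apply: eq_bigr => j _; rewrite big_distrr.
Qed.

Section Queries.
Variable Q : finType.

Lemma poly_deg_le_qapply k (M : qop Q) F :
  poly_deg_le k F -> poly_deg_le k (fun x => qapply M (F x)).
Proof.
move=> [J [S [w [le_S eqF]]]]; exists J, S, (fun j => qapply M (w j)); split=> // x q.
rewrite /qapply; under eq_bigr do rewrite eqF big_distrr.
rewrite exchange_big; apply: eq_bigr => j _.
by rewrite big_distrr /=; apply: eq_bigr => s _; rewrite mulrCA.
Qed.

Lemma poly_deg_le_query k (O : X -> qop Q) (A B : qop Q) (g : Q -> V) F :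
  (forall x t s, O x t s = A t s + monomial [set g s] x * B t s) ->
  poly_deg_le k F -> poly_deg_le k.+1 (fun x => qapply (O x) (F x)).
Proof.
move=> eqO [J [S [w [le_S eqF]]]].
exists (J + J * Q)%type,
  (fun u => match u with inl j => S j | inr js => g js.2 |: S js.1 end),
  (fun u => match u with
            | inl j => qapply A (w j) | inr js => fun t => B t js.2 * w js.1 js.2 end).
split=> [[j | [j s]] | x q]; first exact: leq_trans (le_S j) _.
  by rewrite cardsU1 -add1n leq_add ?leq_b1.
rewrite big_sumType /=.
transitivity (\sum_s A q s * F x s + \sum_s monomial [set g s] x * B q s * F x s).
  by rewrite -big_split; apply: eq_bigr => s _; rewrite eqO mulrDl.
congr (_ + _).
  rewrite [RHS](eq_bigr (fun j => \sum_s monomial (S j) x * (A q s * w j s))); last first.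
    by move=> j _; rewrite /qapply big_distrr.
  rewrite exchange_big; apply: eq_bigr => s _; rewrite eqF big_distrr.
  by apply: eq_bigr => j _; rewrite mulrCA.
rewrite -(pair_bigA _ (fun j s => monomial (g s |: S j) x * (B q s * w j s))) exchange_big.
apply: eq_bigr => s _; rewrite eqF big_distrr.
by apply: eq_bigr => j _; rewrite -monomialU mulrACA.
Qed.

Lemma poly_deg_le_qrun (O : X -> qop Q) (A B : qop Q) (g : Q -> V) (U : nat -> qop Q) v0 k :
  (forall x t s, O x t s = A t s + monomial [set g s] x * B t s) ->
  poly_deg_le k (fun x => qrun (O x) U v0 k).
Proof.
move=> eqO; elim: k => [|k IHk] /=; first exact/poly_deg_le_qapply/poly_deg_le_const.
exact/poly_deg_le_qapply/(poly_deg_le_query eqO).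
Qed.

End Queries.

Lemma poly_deg_le_sqr_norm (Y : Type) k (F : X -> Y -> Cx) :
  poly_deg_le k F -> poly_deg_le k.*2 (fun x y => `|F x y| ^+ 2).
Proof.
move=> [J [S [w [le_S eqF]]]].
exists (J * J)%type, (fun jj => S jj.1 :|: S jj.2), (fun jj y => w jj.1 y * (w jj.2 y)^*).
split=> [[j j'] | x y] /=; first by rewrite (leq_trans (leq_card_setU _ _)) // -addnn leq_add.
rewrite normCK eqF rmorph_sum big_distrl.
rewrite -(pair_bigA _ (fun j j' => monomial (S j :|: S j') x * (w j y * (w j' y)^*))).
apply: eq_bigr => j _; rewrite big_distrr /=; apply: eq_bigr => j' _.
by rewrite (rmorphM Num.conj) /= conj_monomial -monomialU mulrACA.
Qed.

End PolynomialMethod.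

Section Norm.
Variable Q : finType.

Definition nrm2 (v : Q -> Cx) : Cx := \sum_t `|v t| ^+ 2.

Lemma nrm2_qapply (M : qop Q) v : unitary M -> nrm2 (qapply M v) = nrm2 v.
Proof.
move=> unitM; rewrite /nrm2 /qapply.
under eq_bigr do rewrite normCK rmorph_sum big_distrl /=.
under eq_bigr do under eq_bigr do rewrite big_distrr /=.
rewrite exchange_big; under eq_bigr do rewrite exchange_big /=.
apply: eq_bigr => s _.
transitivity (\sum_s' v s * (v s')^* * \sum_t (M t s')^* * M t s).
  apply: eq_bigr => s' _; rewrite big_distrr; apply: eq_bigr => t _ /=.
  by rewrite (rmorphM Num.conj) /=; ring.
under eq_bigr do rewrite unitM.
rewrite (bigD1 s) //= eqxx mulr1 normCK big1 ?addr0 // => s' /negbTE.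
by rewrite eq_sym => ->; rewrite mulr0.
Qed.

Lemma nrm2_qrun (O : qop Q) (U : nat -> qop Q) v0 k :
  unitary O -> (forall j, (j <= k)%N -> unitary (U j)) ->
  nrm2 (qrun O U v0 k) = nrm2 v0.
Proof.
move=> unitO; elim: k => [|k IHk] unitU /=; first exact/nrm2_qapply/unitU.
rewrite (nrm2_qapply (M := U k.+1)); last exact: unitU.
rewrite (nrm2_qapply (M := O)) // IHk // => j le_jk.
exact/unitU/leqW.
Qed.

Lemma nrm2_delta (t0 : Q) : nrm2 (delta t0) = 1.
Proof.
rewrite /nrm2 (bigD1 t0) //= /delta eqxx normr1 expr1n big1 ?addr0 // => t /negbTE ->.
by rewrite normr0 expr0n.
Qed.

Lemma unitary_perm (f : Q -> Q) : injective f -> unitary (fun t s => (t == f s)%:R).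
Proof.
move=> inj_f t t'; rewrite (bigD1 (f t)) //= eqxx conjC_nat mul1r big1 ?addr0.
  by rewrite (inj_eq inj_f) eq_sym.
by move=> s /negbTE ->; rewrite conjC_nat mul0r.
Qed.

End Norm.

Section DiagonalDominance.
Variables (R : numFieldType) (n : nat) (P : 'M[R]_n).
Hypotheses (P_ge0 : forall i j, 0 <= P i j) (P_row : forall i, \sum_j P i j <= 1).
Hypothesis P_diag : forall i, 1 < P i i *+ 2.

Lemma sum_diag_le_offdiag (v : 'rV[R]_n) : v *m P = 0 ->
  \sum_j `|v 0 j| * P j j <= \sum_i `|v 0 i| * (1 - P i i).
Proof.
move=> vP0; have col_le j : `|v 0 j| * P j j <= \sum_(i | i != j) `|v 0 i| * P i j.
  move/rowP/(_ j): vP0; rewrite !mxE (bigD1 j) //= => /eqP; rewrite addr_eq0 => /eqP eq_j.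
  rewrite -(ger0_norm (P_ge0 j j)) -normrM eq_j normrN (le_trans (ler_norm_sum _ _ _)) //.
  by apply: ler_sum => i _; rewrite normrM (ger0_norm (P_ge0 _ _)).
apply: le_trans (ler_sum _ (fun j _ => col_le j)) _.
rewrite (exchange_big_dep predT) //=; apply: ler_sum => i _.
rewrite -big_distrr /= ler_wpM2l // lerBrDl.
by move: (P_row i); rewrite (bigD1 i) //=; under eq_bigl do rewrite eq_sym.
Qed.

Lemma row_free_diag_dominant : row_free P.
Proof.
rewrite -kermx_eq0; apply/rowV0P => v /sub_kermxP /sum_diag_le_offdiag dominated.
have sum_le0 : \sum_i `|v 0 i| * (P i i *+ 2 - 1) <= 0.
  rewrite (eq_bigr (fun i => `|v 0 i| * P i i - `|v 0 i| * (1 - P i i))).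
    by rewrite sumrB subr_le0.
  by move=> i _; rewrite mulr2n; ring.
have term_ge0 i : 0 <= `|v 0 i| * (P i i *+ 2 - 1) by rewrite mulr_ge0 // subr_ge0 ltW.
have sum_eq0 : \sum_i `|v 0 i| * (P i i *+ 2 - 1) = 0.
  by apply/le_anti; rewrite sum_le0 sumr_ge0.
apply/rowP => i; rewrite mxE; apply/eqP.
have /eqP := psumr_eq0P (fun j _ => term_ge0 j) sum_eq0 (i := i) isT.
by rewrite mulf_eq0 normr_eq0 subr_eq0 (gt_eqF (P_diag i)) orbF.
Qed.

End DiagonalDominance.

Lemma sum_fibres_le (R : numDomainType) (I Q : finType) (K : eqType)
    (out : Q -> K) (k : I -> K) (f : Q -> R) :
  injective k -> (forall q, 0 <= f q) ->
  \sum_i \sum_(q | out q == k i) f q <= \sum_q f q.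
Proof.
move=> inj_k f_ge0; rewrite (exchange_big_dep predT) //=; apply: ler_sum => q _.
case: (pickP (fun i => out q == k i)) => [i0 /eqP out_q | no_i]; last first.
  by rewrite big_pred0.
rewrite (big_pred1 i0) // => i /=.
by rewrite out_q (inj_eq inj_k) eq_sym.
Qed.

Lemma mxrank_poly_deg_le (V : finType) (Y : Type) k (G : {ffun V -> bool} -> Y -> Cx)
    m n (a : 'I_m -> {ffun V -> bool}) (b : 'I_n -> Y) :
  poly_deg_le k G -> (\rank (\matrix_(i, j) G (a i) (b j)) <= #|[set S : {set V} | #|S| <= k]|)%N.
Proof.
move=> [J [S [w [le_S eqG]]]]; set small := [set S : {set V} | _].
pose Bm : 'M_(m, #|small|) := \matrix_(i, s) monomial (enum_val s) (a i).
pose Am : 'M_(#|small|, n) := \matrix_(s, j) \sum_(l | S l == enum_val s) w l (b j).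
suff -> : \matrix_(i, j) G (a i) (b j) = Bm *m Am.
  exact: leq_trans (mxrankM_maxl _ _) (rank_leq_col _).
apply/matrixP => i j; rewrite !mxE eqG.
rewrite (partition_big S (mem small)) => [|l _]; last by rewrite !inE le_S.
rewrite big_enum_val /=; apply: eq_bigr => s _; rewrite !mxE big_distrr /=.
by apply: eq_bigr => l /eqP ->.
Qed.

Lemma two_thirds_mulr2n_gt1 (R : numFieldType) (p : R) : 2%:R / 3%:R <= p -> 1 < p *+ 2.
Proof.
move=> le_p; apply: lt_le_trans (ler_wMn2r 2 le_p).
by rewrite -mulrnAl -mulr_natr -natrM ltr_pdivlMr ?ltr0n // mul1r ltr_nat.
Qed.

Lemma polynomial_method (V Q : finType) (K : eqType) (T : nat)
    (O : {ffun V -> bool} -> qop Q) (A B : qop Q) (g : Q -> V)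
    (U : nat -> qop Q) (v0 : Q -> Cx) (out : Q -> K) (ker : {ffun V -> bool} -> K) :
  (forall x t s, O x t s = A t s + monomial [set g s] x * B t s) ->
  (forall x, unitary (O x)) -> (forall k, (k <= T)%N -> unitary (U k)) ->
  nrm2 v0 = 1 -> injective ker ->
  (forall x, 2%:R / 3%:R <= \sum_(q | out q == ker x) `|qrun (O x) U v0 T q| ^+ 2) ->
  (2 ^ #|V| <= #|[set S : {set V} | #|S| <= T.*2]|)%N.
Proof.
move=> eqO unitO unitU nrm_v0 inj_ker succ.
pose prob x y := \sum_(q | out q == ker y) `|qrun (O x) U v0 T q| ^+ 2.
have deg_prob : poly_deg_le T.*2 prob.
  exact/poly_deg_le_sum/poly_deg_le_sqr_norm/(poly_deg_le_qrun _ _ _ eqO).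
pose x_ (i : 'I_#|{ffun V -> bool}|) := enum_val i.
pose P := \matrix_(i, j) prob (x_ i) (x_ j).
have free_P : row_free P.
  apply: row_free_diag_dominant => [i j | i | i]; rewrite ?mxE.
  - by apply: sumr_ge0 => q _; apply: exprn_ge0.
  - under eq_bigr do rewrite mxE.
    rewrite -nrm_v0 -(nrm2_qrun v0 (unitO (x_ i)) unitU).
    apply: sum_fibres_le => [j j' /inj_ker /enum_val_inj // | q].
    exact: exprn_ge0.
  - exact/two_thirds_mulr2n_gt1/succ.
have := mxrank_poly_deg_le x_ x_ deg_prob.
by rewrite (eqP free_P) card_ffun card_bool.
Qed.

Definition literal_or_const k (f : ('I_k -> bool) -> bool) : Prop :=
  [\/ exists j, forall y, f y = y j, exists j, forall y, f y = ~~ y j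
    | exists c, forall y, f y = c].

Lemma teval_U_literal_or_const k (t : term u_ar k) : literal_or_const (teval u_ops t).
Proof.
elim: t => [j | [] ts IHts] /=; first by apply: Or31; exists j.
  case: (IHts ord0) => [[j eq_j] | [j eq_j] | [c eq_c]].
  - by apply: Or32; exists j => y; rewrite eq_j.
  - by apply: Or31; exists j => y; rewrite eq_j negbK.
  - by apply: Or33; exists (~~ c) => y; rewrite eq_c.
by apply: Or33; exists false.
Qed.

Lemma clo_U_literal_or_const (I : Type) (ar : I -> nat)
    (opsB : forall i, ('I_(ar i) -> bool) -> bool) :
  clo_is_U opsB -> forall i, literal_or_const (opsB i).
Proof.
move=> cloU i; case: (posnP (ar i)) => [ar0 | ar_gt0].
  apply: Or33; exists (opsB i (fun _ => false)) => y; congr (opsB i _).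
  by apply: functional_extensionality => -[l lt_l]; exfalso; move: lt_l; rewrite ar0.
have [t eq_t] : in_clo u_ops (opsB i).
  by apply/(cloU _ ar_gt0); exists (tapp (fun l => tvar ar l)).
case: (teval_U_literal_or_const t) => [[j eq_j] | [j eq_j] | [c eq_c]].
- by apply: Or31; exists j => y; rewrite -eq_t eq_j.
- by apply: Or32; exists j => y; rewrite -eq_t eq_j.
- by apply: Or33; exists c => y; rewrite -eq_t eq_c.
Qed.

Section Endomorphisms.
Variable p : nat.
Local Notation A := (pow_carrier p.+2).
Local Notation V := {ffun 'I_p -> bool}.

Definition coord1 : 'I_p.+2 := lift ord0 ord0.

Definition tail_key (a : A) : V := [ffun j => a (lift ord0 (lift ord0 j)) (+) a ord0].
Definition copy_coord0 (a : A) : A := [ffun j => if j == coord1 then a ord0 else a j].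
Definition endo (x : {ffun V -> bool}) (a : A) : A :=
  if x (tail_key a) then copy_coord0 a else a.
Definition ker_endo (x : {ffun V -> bool}) : {set A * A} :=
  [set ab | endo x ab.1 == endo x ab.2].

Definition complement (a : A) : A := [ffun j => ~~ a j].
Definition constant (c : bool) : A := [ffun => c].

Lemma tail_key_complement a : tail_key (complement a) = tail_key a.
Proof. by apply/ffunP => j; rewrite !ffunE addbN addNb negbK. Qed.

Lemma copy_coord0_complement a : copy_coord0 (complement a) = complement (copy_coord0 a).
Proof. by apply/ffunP => j; rewrite !ffunE; case: ifP. Qed.

Lemma endo_complement x a : endo x (complement a) = complement (endo x a).
Proof. by rewrite /endo tail_key_complement copy_coord0_complement; case: ifP. Qed.

Lemma endo_constant x c : endo x (constant c) = constant c.
Proof. by rewrite /endo; case: ifP => // _; apply/ffunP => j; rewrite !ffunE; case: ifP. Qed.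

Lemma endo_hom (I : Type) (ar : I -> nat) (opsB : forall i, ('I_(ar i) -> bool) -> bool) x :
  clo_is_U opsB -> is_hom (@pow_ops _ _ opsB p.+2) (@pow_ops _ _ opsB p.+2) (endo x).
Proof.
move=> cloU i args.
case: (clo_U_literal_or_const cloU i) => [[j eq_j] | [j eq_j] | [c eq_c]].
- have eq_op (b : 'I_(ar i) -> A) : @pow_ops _ _ opsB p.+2 i b = b j.
    by apply/ffunP => t; rewrite ffunE eq_j.
  by rewrite !eq_op.
- have eq_op (b : 'I_(ar i) -> A) : @pow_ops _ _ opsB p.+2 i b = complement (b j).
    by apply/ffunP => t; rewrite !ffunE eq_j.
  by rewrite !eq_op endo_complement.
- have eq_op (b : 'I_(ar i) -> A) : @pow_ops _ _ opsB p.+2 i b = constant c.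
    by apply/ffunP => t; rewrite !ffunE eq_c.
  by rewrite !eq_op endo_constant.
Qed.

Lemma is_ker_endo x : is_ker (ker_endo x) (endo x).
Proof. by move=> a b; rewrite inE; split=> /eqP. Qed.

Definition tail_embed (v : V) : A := [ffun j =>
  if unlift ord0 j is Some j1 then if unlift ord0 j1 is Some j2 then v j2 else false
  else false].
Definition set_coord1 (a : A) : A := [ffun j => (j == coord1) || a j].

Lemma tail_embed0 v : tail_embed v ord0 = false.
Proof. by rewrite ffunE unlift_none. Qed.

Lemma tail_embed1 v : tail_embed v coord1 = false.
Proof. by rewrite ffunE liftK unlift_none. Qed.

Lemma tail_key_embed v : tail_key (tail_embed v) = v.
Proof. by apply/ffunP => j; rewrite ffunE tail_embed0 addbF ffunE !liftK. Qed.

Lemma tail_key_set_coord1 a : tail_key (set_coord1 a) = tail_key a.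
Proof. by apply/ffunP => j; rewrite !ffunE -!(inj_eq val_inj). Qed.

(* The pair below differs only in coordinate 1, which [endo x] overwrites iff [x v]. *)
Lemma mem_ker_endo x v :
  ((tail_embed v, set_coord1 (tail_embed v)) \in ker_endo x) = x v.
Proof.
rewrite inE /endo tail_key_set_coord1 tail_key_embed /=; case: (x v).
  by apply/eqP/ffunP => j; rewrite !ffunE; case: ifP.
by apply/negbTE/eqP => /ffunP /(_ coord1); rewrite tail_embed1 ffunE eqxx.
Qed.

Lemma ker_endo_inj : injective ker_endo.
Proof. by move=> x x' eq_ker; apply/ffunP => v; rewrite -!mem_ker_endo eq_ker. Qed.

End Endomorphisms.

Lemma unitary_oracle n m d (e : pow_carrier n -> {ffun 'I_m -> bool}) :
  unitary (oracle (d := d) e).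
Proof.
apply/unitary_perm/(can_inj (g := oracle_shift e)) => -[[a y] w] /=.
by congr (_, _, _); apply/ffunP => j; rewrite !ffunE addbK.
Qed.

Section EndoOracle.
Variables p d : nat.
Local Notation Qb := (qbasis p.+2 p.+2 d).

Definition endo_shift (b : bool) (s : Qb) : Qb :=
  let: (a, y, w) := s in (a, [ffun j => y j (+) (if b then copy_coord0 a else a) j], w).

Definition query_key (s : Qb) : {ffun 'I_p -> bool} := tail_key s.1.1.

Lemma oracle_endo_affine x t s :
  oracle (d := d) (endo x) t s =
  (t == endo_shift false s)%:R +
  monomial [set query_key s] x * ((t == endo_shift true s)%:R - (t == endo_shift false s)%:R).
Proof.
rewrite monomial1; case: s => [[a y] w]; rewrite /oracle /query_key /endo /=.
by case: (x (tail_key a)); rewrite ?mul1r ?mul0r ?addr0 // addrC subrK.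
Qed.

End EndoOracle.

Theorem lemma5p7 (I : Type) (ar : I -> nat)
  (opsB : forall i, ('I_(ar i) -> bool) -> bool)
  (hB : clo_is_U opsB) :
  exists c : Rdefinitions.R, 0 < c /\
  exists N : nat, forall n : nat, (N <= n)%N ->
    forall T : nat, solves_HKP_quantum opsB n T ->
      c * 2%:R ^+ n <= T%:R.
Proof.
exists 20%:R^-1; split; first by rewrite invr_gt0 ltr0n.
exists 2%N => -[|[|p]] // _ T solves.
have [d [U [out [unitU succ]]]] := solves _ (@pow_ops _ _ opsB p.+2) _ id (@inj_id _).
have : (#|{ffun 'I_p -> bool}| <= 5 * T)%N.
  apply: card_le_small_sets.
  apply: (@polynomial_method _ _ _ _ (fun x => oracle (d := d) (endo x))
           (fun t s => (t == endo_shift false s)%:R)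
           (fun t s => (t == endo_shift true s)%:R - (t == endo_shift false s)%:R)
           (@query_key p d) U (delta (qinit _ _ _)) out (@ker_endo p)).
  - exact: oracle_endo_affine.
  - by move=> x; exact: unitary_oracle.
  - exact: unitU.
  - exact: nrm2_delta.
  - exact: ker_endo_inj.
  - by move=> x; apply: (succ (endo x) (endo_hom x hB) _ (is_ker_endo x)).
rewrite card_ffun card_bool card_ord => le_2p.
rewrite -natrX ler_pdivrMl ?ltr0n // -natrM ler_nat !expnS.
lia.
Qed.
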